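(* Consider the scalar linear system $$\frac{dx(t)}{dt} = A\,x(t) + B_p\,p(t) + B_d\,d(t),\qquad t\in\mathcal{T}=[0,t_f],$$ with scalar constants $A\le 0$ and $B_p\ge 0$, a given disturbance $d$ and a given initial state $x(0)=x_0$. Fix bounds $0\le p_{\min}\le p_{\max}$ and $x_{\min}\le x_{\max}$. Let $p_+$ and $p_-$ be feasible power trajectories: $p_{\min}\le p_\pm(t)\le p_{\max}$ for all $t\in\mathcal{T}$, and the resulting states $x_\pm$ (same $x_0$ and $d$) satisfy $x_{\min}\le x_\pm(t)\le x_{\max}$ for all $t\in\mathcal{T}$. Let $p_a$ be a power trajectory with $p_{\min}\le p_a(t)\le p_{\max}$ for all $t$, and let $x_a$ be the resulting state (same $x_0$ and $d$). If for all $t\in\mathcal{T}$ $$\mathrm{E}^{\mathrm{TI}}_{\mathrm{down}}(t):=\int_0^t e^{-A\tau}p_-(\tau)\,d\tau \;\le\; \int_0^t p_a(\tau)\,d\tau \;\le\; \int_0^t e^{A(t-\tau)}p_+(\tau)\,d\tau =: \mathrm{E}^{\mathrm{TI}}_{\mathrm{up}}(t),$$ then $x_{\min}\le x_a(t)\le x_{\max}$ for all $t\in\mathcal{T}$; that is, $\mathrm{E}^{\mathrm{TI}}_{\mathrm{up}}$ and $\mathrm{E}^{\mathrm{TI}}_{\mathrm{down}}$ are trajectory-independent energy flexibility bounds.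
   Context: All power trajectories are (integrable) functions on $\mathcal{T}$; states are the solutions $x(t)=e^{At}x_0+\int_0^t e^{A(t-\tau)}(B_d d(\tau)+B_p p(\tau))\,d\tau$ of the state equation. ''Trajectory-independent (TI) energy bounds'' means: every power trajectory satisfying the power constraints whose cumulative energy $\int_0^t p$ lies between the bounds for all $t$ satisfies the state constraints. *)

From HB Require Import structures.
From mathcomp Require Import all_boot all_order all_algebra.
From mathcomp Require Import all_classical all_reals all_analysis.
Set Implicit Arguments. Unset Strict Implicit. Unset Printing Implicit Defensive.
Import Order.TTheory GRing.Theory Num.Theory.
Local Open Scope classical_set_scope.
Local Open Scope ring_scope.

Definition integral_on {R : realType} (a b : R) (f : R -> R) : R :=
  Rintegral (@lebesgue_measure R) `[a, b] f.

Definition integrable_on {R : realType} (a b : R) (f : R -> R) : Prop :=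
  (@lebesgue_measure R).-integrable `[a, b] (EFin \o f).

(* State of the scalar system dx/dt = A x + Bp p + Bd d, x(0) = x0, given by
   x(t) = e^{At} x0 + int_0^t e^{A(t - tau)} (Bd d(tau) + Bp p(tau)) dtau. *)
Definition state {R : realType} (A Bp Bd x0 : R) (d p : R -> R) (t : R) : R :=
  expR (A * t) * x0
  + integral_on 0 t (fun tau => expR (A * (t - tau)) * (Bd * d tau + Bp * p tau)).

From HB Require Import structures.
From mathcomp Require Import all_boot all_order all_algebra.
From mathcomp Require Import all_classical all_reals all_analysis.
From mathcomp Require Import measurable_realfun ring.
Import Order.TTheory GRing.Theory Num.Theory.
Import numFieldNormedType.Exports.
Local Open Scope classical_set_scope.
Local Open Scope ring_scope.

(* Since [Bp >= 0], the state is a nondecreasing affine function of the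
   response [int_0^t e^{A(t-tau)} p(tau) dtau] to the input [p], so it suffices
   to sandwich the response of [p_a] between those of [p_-] and [p_+].  As
   [A <= 0] and [p_a >= 0], damping by [e^{A(t-tau)} <= 1] only lowers the
   energy of [p_a], which is bounded by the response of [p_+]; writing the
   response as [e^{At} int_0^t e^{-A tau} p(tau) dtau], amplification by
   [e^{-A tau} >= 1] only raises it, and the amplified energy of [p_-] is
   bounded by the energy of [p_a]. *)

Definition response {R : realType} (A t : R) (p : R -> R) : R :=
  integral_on 0 t (fun tau => expR (A * (t - tau)) * p tau).

Section Integrability.
Context {R : realType}.
Implicit Types (a b t : R) (f h : R -> R).

Lemma integrable_on_subset {a b t f} : a <= t <= b ->
  integrable_on a b f -> integrable_on a t f.
Proof.
move=> /andP[_ tb] If; apply: integrableS If => //.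
by apply: subset_itvl; rewrite bnd_simp.
Qed.

Lemma integrable_on_mull a b h f : continuous h ->
  integrable_on a b f -> integrable_on a b (fun x => h x * f x).
Proof.
move=> ch If.
have /compact_bounded[M [_ hM]] :=
  continuous_compact (continuous_subspaceT ch) (@segment_compact _ a b).
rewrite /integrable_on.
have -> : EFin \o (fun x => h x * f x) = ((EFin \o h) \* (EFin \o f))%E.
  exact/funext.
apply: integrableMr If => //.
- apply: subspace_continuous_measurable_fun => //.
  exact: continuous_subspaceT.
- by exists M; split; rewrite ?num_real // => ? ? ? ?; exact: hM.
Qed.

Lemma continuous_expR_affine a b : continuous (fun x : R => expR (a * x + b)).
Proof.
move=> x; apply: continuous_comp; last exact: continuous_expR.
apply: continuousD; last exact: cst_continuous.
by apply: continuousM; [exact: cst_continuous | exact: id].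
Qed.

Lemma integrable_on_expR_affine a b t f : integrable_on 0 t f ->
  integrable_on 0 t (fun x => expR (a * x + b) * f x).
Proof. exact/integrable_on_mull/continuous_expR_affine. Qed.

Lemma integrable_on_expR_linear a t f : integrable_on 0 t f ->
  integrable_on 0 t (fun x => expR (a * x) * f x).
Proof.
move=> /(integrable_on_expR_affine a 0).
by under eq_fun do rewrite addr0.
Qed.

Lemma integrable_on_expR_delay A {t f} : integrable_on 0 t f ->
  integrable_on 0 t (fun x => expR (A * (t - x)) * f x).
Proof.
move=> /(integrable_on_expR_affine (- A) (A * t)).
have -> // : (fun x => expR (- A * x + A * t) * f x)
           = (fun x => expR (A * (t - x)) * f x).
by apply/funext => x; congr (expR _ * _); ring.
Qed.

End Integrability.

Section Comparison.
Context {R : realType}.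
Implicit Types (a b t : R) (f w : R -> R).

Lemma le_integral_on_weight a b w f :
  integrable_on a b f -> integrable_on a b (fun x => w x * f x) ->
  (forall x, a <= x <= b -> 0 <= f x /\ w x <= 1) ->
  integral_on a b (fun x => w x * f x) <= integral_on a b f.
Proof.
move=> If Iwf wf; apply: le_Rintegral => // x; rewrite /= in_itv /=.
by move=> /wf[f0 w1]; rewrite -[leRHS]mul1r ler_wpM2r.
Qed.

Lemma ge_integral_on_weight a b w f :
  integrable_on a b f -> integrable_on a b (fun x => w x * f x) ->
  (forall x, a <= x <= b -> 0 <= f x /\ 1 <= w x) ->
  integral_on a b f <= integral_on a b (fun x => w x * f x).
Proof.
move=> If Iwf wf; apply: le_Rintegral => // x; rewrite /= in_itv /=.
by move=> /wf[f0 w1]; rewrite -[leLHS]mul1r ler_wpM2r.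
Qed.

Lemma responseE A t f : integrable_on 0 t f ->
  response A t f = expR (A * t) * integral_on 0 t (fun x => expR (- A * x) * f x).
Proof.
move=> If; rewrite /response /integral_on -RintegralZl //; last first.
  exact: integrable_on_expR_linear.
by apply: eq_Rintegral => x _; rewrite mulrA -expRD; congr (expR _ * _); ring.
Qed.

Lemma response_le_energy A t f : A <= 0 -> integrable_on 0 t f ->
  (forall x, 0 <= x <= t -> 0 <= f x) ->
  response A t f <= integral_on 0 t f.
Proof.
move=> A0 If f0; apply: le_integral_on_weight => //.
  exact: integrable_on_expR_delay.
move=> x /andP[x0 xt]; split; first exact/f0/andP.
by rewrite expR_le1 mulr_le0_ge0 // subr_ge0.
Qed.

Lemma amplified_energy_ge_energy A t f : A <= 0 -> integrable_on 0 t f ->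
  (forall x, 0 <= x <= t -> 0 <= f x) ->
  integral_on 0 t f <= integral_on 0 t (fun x => expR (- A * x) * f x).
Proof.
move=> A0 If f0; apply: ge_integral_on_weight => //.
  exact: integrable_on_expR_linear.
move=> x /andP[x0 xt]; split; first exact/f0/andP.
by rewrite -expR0 ler_expR mulr_ge0 // oppr_ge0.
Qed.

End Comparison.

Lemma stateE (R : realType) (A Bp Bd x0 t : R) (d p : R -> R) :
  integrable_on 0 t d -> integrable_on 0 t p ->
  state A Bp Bd x0 d p t = state A Bp Bd x0 d (fun=> 0) t + Bp * response A t p.
Proof.
move=> Id Ip; rewrite /state /response /integral_on -addrA; congr (_ + _).
have -> : (fun x => expR (A * (t - x)) * (Bd * d x + Bp * 0))
           = (fun x => Bd * (expR (A * (t - x)) * d x)).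
  by apply/funext => x; ring.
have Ie c g : integrable_on 0 t g ->
    integrable_on 0 t (fun x => c * (expR (A * (t - x)) * g x)).
  by move=> Ig; apply/integrable_on_mull/integrable_on_expR_delay/Ig;
     exact: cst_continuous.
have Id' := Ie Bd d Id; have Ip' := Ie Bp p Ip.
rewrite -RintegralZl //; last exact: integrable_on_expR_delay.
rewrite -RintegralD //.
by apply: eq_Rintegral => x _; ring.
Qed.

Lemma le_state_response (R : realType) (A Bp Bd x0 t : R) (d p q : R -> R) :
  0 <= Bp -> integrable_on 0 t d -> integrable_on 0 t p -> integrable_on 0 t q ->
  response A t p <= response A t q ->
  state A Bp Bd x0 d p t <= state A Bp Bd x0 d q t.
Proof.
move=> Bp0 Id Ip Iq pq.
by rewrite [state _ _ _ _ _ p _]stateE // [state _ _ _ _ _ q _]stateE // lerD2l ler_wpM2l.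
Qed.

Theorem theorem1 (R : realType) (tf A Bp Bd x0 pmin pmax xmin xmax : R)
  (d pplus pminus pa : R -> R) :
  A <= 0 -> 0 <= Bp ->
  0 <= pmin -> pmin <= pmax -> xmin <= xmax ->
  integrable_on 0 tf d ->
  integrable_on 0 tf pplus -> integrable_on 0 tf pminus -> integrable_on 0 tf pa ->
  (forall t, 0 <= t <= tf -> pmin <= pplus t <= pmax) ->
  (forall t, 0 <= t <= tf -> xmin <= state A Bp Bd x0 d pplus t <= xmax) ->
  (forall t, 0 <= t <= tf -> pmin <= pminus t <= pmax) ->
  (forall t, 0 <= t <= tf -> xmin <= state A Bp Bd x0 d pminus t <= xmax) ->
  (forall t, 0 <= t <= tf -> pmin <= pa t <= pmax) ->
  (forall t, 0 <= t <= tf ->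
     integral_on 0 t (fun tau => expR (- A * tau) * pminus tau)
       <= integral_on 0 t pa
       <= integral_on 0 t (fun tau => expR (A * (t - tau)) * pplus tau)) ->
  forall t, 0 <= t <= tf -> xmin <= state A Bp Bd x0 d pa t <= xmax.
Proof.
move=> A0 Bp0 pmin0 _ _ Id Ipp Ipm Ipa _ Sp _ Sm Fa En t ht.
have Idt := integrable_on_subset ht Id.
have Ippt := integrable_on_subset ht Ipp.
have Ipmt := integrable_on_subset ht Ipm.
have Ipat := integrable_on_subset ht Ipa.
have pa0 x : 0 <= x <= t -> 0 <= pa x.
  move=> /andP[x0' xt]; have /Fa/andP[+ _] : 0 <= x <= tf.
    by rewrite x0' (le_trans xt) //; case/andP: ht.
  exact: le_trans.
have /andP[Elo Eup] := En t ht.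
have /andP[_ Sp2] := Sp t ht; have /andP[Sm1 _] := Sm t ht.
apply/andP; split.
- apply: (le_trans Sm1); apply: le_state_response => //.
  rewrite !responseE // ler_wpM2l ?expR_ge0 //.
  by apply: (le_trans Elo); apply: amplified_energy_ge_energy.
- apply: le_trans Sp2; apply: le_state_response => //.
  by apply: le_trans Eup; apply: response_le_energy.
Qed.
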